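(* Let $p$ be a prime and $f\ge1$. Suppose $r_0,\dots,r_{f-1}$ are integers in $[-p,p]$ satisfying $\sum_{i=0}^{f-1}p^{f-1-i}r_i\equiv0\pmod{p^f-1}$. Then one of the following holds: (1) $(r_0,\dots,r_{f-1})=\pm(p-1,\dots,p-1)$; (2) the list $r_0,\dots,r_{f-1}$, regarded cyclically (indices mod $f$), can be partitioned into blocks of consecutive entries, each block being either all zeros $(0,\dots,0)$ or of the form $\epsilon(-1,p-1,\dots,p-1,p)$ (i.e. $r_i=-\epsilon$, $r_{i+1}=\dots=r_{i+j-1}=\epsilon(p-1)$, $r_{i+j}=\epsilon p$ for some $j\ge1$, with possibly no entries equal to $\epsilon(p-1)$), where the sign $\epsilon\in\{\pm1\}$ may depend on the block; or (3) $p=2$ and $(r_0,\dots,r_{f-1})=\pm(2,\dots,2)$. *)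

From HB Require Import structures.
From mathcomp Require Import all_boot all_order all_algebra.
Set Implicit Arguments. Unset Strict Implicit. Unset Printing Implicit Defensive.
Import Order.TTheory GRing.Theory Num.Theory.
Local Open Scope ring_scope.

Definition good_block (p : nat) (b : seq int) : Prop :=
  (b <> [::] /\ all (fun x => x == 0) b) \/
  exists (eps : int) (k : nat), (eps = 1 \/ eps = -1) /\
    b = [seq eps * x | x <- (-1) :: rcons (nseq k (p%:Z - 1)) p%:Z].

Definition cyclic_block_decomp (p : nat) (r : seq int) : Prop :=
  exists (s : nat) (bs : seq (seq int)),
    flatten bs = rot s r /\ (forall b, b \in bs -> good_block p b).

From HB Require Import structures.
From mathcomp Require Import all_boot all_order all_algebra.
From mathcomp Require Import ring lra zify.
Import Order.TTheory GRing.Theory Num.Theory.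
Local Open Scope ring_scope.

(* Proof idea: "carrying" in base p.  Write S = sum_i p^(f-1-i) r_i = k (p^f - 1)
   and define carries a_0 = k, a_(i+1) = p a_i - r_i, so that r_i = p a_i - a_(i+1)
   and, by the divisibility, a_f = a_0: the carries are f-periodic.
   If |a_i0| is the largest carry, |r_i0| <= p forces (p-1)|a_i0| <= p, so either
   p = 2 with a carry of size 2, or every carry lies in {-1, 0, 1}.
   - A carry of size 2 (p = 2), or carries that never vanish, propagate around the
     cycle and are constant equal to e, so r = (p e - e, ..., p e - e): cases (3), (1).
   - If some carry a_s vanishes, reading r cyclically from s, the digits between two
     consecutive zero carries form a block 0 or eps(-1, p-1, ..., p-1, p): case (2). *)

Definition digit (P x y : int) : int := P * x - y.

Definition digits (P c : int) (t : seq int) : seq int := pairmap (digit P) c t.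

Section BlockDecomposition.
Variable p : nat.

Definition small_carries (t : seq int) : bool := all (fun x => `|x| <= 1) t.
Definition bounded_digits (d : seq int) : bool := all (fun z => `|z| <= p%:Z) d.

(* Starting from a carry e = +-1, the carries stay equal to e until they drop to 0;
   meanwhile the digits are e(p-1), ..., e(p-1), then e p at the drop. *)
Lemma digits_nonzero_run (e : int) (t : seq int) :
  (e = 1 \/ e = -1) -> last e t = 0 -> small_carries t ->
  bounded_digits (digits p e t) ->
  exists k u, digits p e t = rcons (nseq k (e * (p%:Z - 1))) (e * p%:Z) ++ digits p 0 u
    /\ (size u < size t)%N /\ last 0 u = 0 /\ small_carries u.
Proof.
move=> He; elim: t => [|y t IH] /=; first by case: He => ->.
move=> last0 /andP[y_small t_small] /andP[dy_bd dt_bd].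
have [y0|y_nz] := eqVneq y 0.
  subst y; exists 0%N, t; split; first by rewrite /= /digit subr0 mulrC.
  by split.
have ye : y = e by move: dy_bd; rewrite /digit; case: He => ->; nia.
subst y.
have [k [u [-> [size_u last_small]]]] := IH last0 t_small dt_bd.
exists k.+1, u; split; last by split => //; lia.
by rewrite /digit /= mulrBr mulr1 mulrC.
Qed.

Lemma digits_block_decomp (t : seq int) :
  last 0 t = 0 -> small_carries t -> bounded_digits (digits p 0 t) ->
  exists bs, flatten bs = digits p 0 t /\ (forall b, b \in bs -> good_block p b).
Proof.
have [n] := ubnP (size t); elim: n t => // n IH [|y t] /= size_lt; first by exists [::].
move=> last0 /andP[y_small t_small] /andP[dy_bd dt_bd].
have [y0|y_nz] := eqVneq y 0.
  subst y; have [bs [Ebs Gbs]] := IH t size_lt last0 t_small dt_bd.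
  exists ([:: 0] :: bs); split; first by rewrite /= Ebs /digit mulr0 subr0.
  by move=> b; rewrite inE => /orP[/eqP->|/Gbs//]; left.
have He : y = 1 \/ y = -1 by lia.
have [k [u [Et [size_u [last_u u_small]]]]] := digits_nonzero_run y t He last0 t_small dt_bd.
have du_bd : bounded_digits (digits p 0 u).
  by move: dt_bd; rewrite /bounded_digits Et all_cat => /andP[].
have [bs [Ebs Gbs]] := IH u (leq_trans size_u (ltnW size_lt)) last_u u_small du_bd.
exists ((- y :: rcons (nseq k (y * (p%:Z - 1))) (y * p%:Z)) :: bs); split.
  by rewrite /= Et Ebs /digit mulr0 sub0r.
move=> b; rewrite inE => /orP[/eqP->|/Gbs//]; right.
by exists y, k; rewrite /= mulrN1 map_rcons map_nseq.
Qed.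

End BlockDecomposition.

Lemma modSn m d : (m.+1 %% d = (m %% d).+1 %% d)%N.
Proof. by rewrite -addn1 -modnDml addn1. Qed.

Lemma nth_rot_mod {T : Type} (x0 : T) (r : seq T) s n :
  (s < size r)%N -> (n < size r)%N -> nth x0 (rot s r) n = nth x0 r ((s + n) %% size r).
Proof.
move=> s_lt n_lt; rewrite /rot nth_cat size_drop.
case: ltnP => h; first by rewrite nth_drop modn_small //; lia.
rewrite nth_take; last by lia.
rewrite (_ : s + n = size r + (n - (size r - s)))%N; last by lia.
by rewrite modnDl modn_small //; lia.
Qed.

Lemma nseq_from_nth {T : Type} (x0 c : T) (r : seq T) f :
  size r = f -> (forall i, (i < f)%N -> nth x0 r i = c) -> r = nseq f c.
Proof.
move=> size_r Hr; apply: (eq_from_nth (x0 := x0)); first by rewrite size_nseq.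
by move=> i; rewrite size_r => i_lt; rewrite nth_nseq i_lt Hr.
Qed.

Section PeriodicCarries.
Context {f : nat} {a : nat -> int}.
Hypotheses (f_gt0 : (0 < f)%N) (carry_period : a f = a 0%N).

Definition cyc_carry (m : nat) : int := a (m %% f).

Lemma carry_mod m : (m <= f)%N -> a (m %% f) = a m.
Proof.
case: (ltnP m f) => [m_lt _|m_ge m_le]; first by rewrite modn_small.
have -> : m = f by lia.
by rewrite modnn carry_period.
Qed.

Lemma max_carry : exists2 i0, (i0 < f)%N & forall i, (i <= f)%N -> `|a i| <= `|a i0|.
Proof.
have [i0 Emax] := bigop.eq_bigmax (fun i : 'I_f => absz (a i)) (ltac:(by rewrite card_ord)).
exists i0 => // i i_le; rewrite -!abszE lez_nat -Emax -carry_mod //.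
exact: (bigop.leq_bigmax (Ordinal (ltn_pmod i f_gt0))).
Qed.

Lemma carry_constant (e : int) i0 :
  (forall i, (i < f)%N -> a i = e -> a i.+1 = e) -> (i0 <= f)%N -> a i0 = e ->
  forall j, (j <= f)%N -> a j = e.
Proof.
move=> step i0_le ai0; have from i j : (i <= j <= f)%N -> a i = e -> a j = e.
  move=> /andP[]; elim: j => [|j IH]; first by rewrite leqn0 => /eqP->.
  rewrite leq_eqVlt => /orP[/eqP<- //|ij j_lt ai].
  by apply: (step j j_lt); apply: IH => //; apply: ltnW.
move=> j j_le; apply: (from 0%N) => //.
by rewrite -carry_period; apply: (from i0) => //; rewrite i0_le leqnn.
Qed.

Context {p : nat} {r : seq int}.
Hypothesis size_r : size r = f.
Hypothesis digit_bound : forall i, (i < f)%N -> `|r`_i| <= p%:Z.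
Hypothesis carry_rel : forall i, r`_i = digit p (a i) (a i.+1).

Lemma cyc_carry_rel m : r`_(m %% f) = digit p (cyc_carry m) (cyc_carry m.+1).
Proof. by rewrite carry_rel /cyc_carry modSn (carry_mod _ (ltn_pmod m f_gt0)). Qed.

Lemma digits_of_constant_carry (e : int) :
  (forall j, (j <= f)%N -> a j = e) -> r = nseq f (p%:Z * e - e).
Proof.
move=> ae; apply: (nseq_from_nth 0 _ _ _ size_r) => j j_lt.
by rewrite carry_rel /digit ae ?ae //; apply: ltnW.
Qed.

Lemma rot_digits s : (s < f)%N ->
  rot s r = digits p (cyc_carry s) [seq cyc_carry (s + j.+1) | j <- iota 0 f].
Proof.
move=> s_lt; apply: (eq_from_nth (x0 := 0)).
  by rewrite size_pairmap size_map size_iota size_rot size_r.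
rewrite size_rot size_r => n n_lt.
rewrite nth_rot_mod ?size_r // (nth_pairmap 0) ?size_map ?size_iota //.
rewrite (nth_map 0%N) ?size_iota // nth_iota // add0n cyc_carry_rel addnS.
by case: n n_lt => [|n] n_lt /=; rewrite ?addn0 // (nth_map 0%N) ?size_iota ?nth_iota //; lia.
Qed.

Lemma constant_digits_of_large_carry i0 :
  p = 2%N -> (forall i, (i <= f)%N -> `|a i| <= 2) -> (i0 < f)%N -> `|a i0| = 2 ->
  r = nseq f 2 \/ r = nseq f (-2).
Proof.
move=> p2 carry_bd i0_lt ai0; have He : a i0 = 2 \/ a i0 = -2 by lia.
have step i : (i < f)%N -> a i = a i0 -> a i.+1 = a i0.
  move=> i_lt ai; move: (digit_bound i i_lt) (carry_bd i.+1 i_lt).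
  by rewrite carry_rel /digit ai p2; case: He => ->; lia.
have := digits_of_constant_carry _ (carry_constant _ _ step (ltnW i0_lt) erefl).
by rewrite p2; case: He => -> ->; [left | right].
Qed.

Hypothesis small_carry : forall i, (i <= f)%N -> `|a i| <= 1.

Lemma block_decomp_of_zero_carry s :
  (s < f)%N -> a s = 0 -> cyclic_block_decomp p r.
Proof.
move=> s_lt as0; pose t := [seq cyc_carry (s + j.+1) | j <- iota 0 f].
have cyc_s : cyc_carry s = 0 by rewrite /cyc_carry modn_small.
have last_t : last 0 t = 0.
  rewrite -nth_last size_map size_iota (nth_map 0%N) ?size_iota; last by lia.
  by rewrite nth_iota; [rewrite add0n prednK // /cyc_carry modnDr modn_small | lia].
have t_small : small_carries t.
  by apply/allP => x /mapP[j _ ->]; apply: small_carry; apply: ltnW; apply: ltn_pmod.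
have t_bd : bounded_digits p (digits p 0 t).
  rewrite -cyc_s -rot_digits //; apply/allP => z; rewrite mem_rot => /(nthP 0)[i].
  by rewrite size_r => i_lt <-; apply: digit_bound.
have [bs [Ebs Gbs]] := @digits_block_decomp p t last_t t_small t_bd.
by exists s, bs; rewrite Ebs -cyc_s -rot_digits.
Qed.

Lemma constant_digits_of_nonzero_carries :
  (forall i, (i < f)%N -> a i != 0) ->
  r = nseq f (p%:Z - 1) \/ r = nseq f (- (p%:Z - 1)).
Proof.
move=> a_nz; have a0_nz := a_nz 0%N f_gt0.
have He : a 0%N = 1 \/ a 0%N = -1 by have := small_carry 0 (leq0n f); lia.
have step i : (i < f)%N -> a i = a 0%N -> a i.+1 = a 0%N.
  move=> i_lt ai; have next_nz : a i.+1 != 0.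
    case: (ltnP i.+1 f) => [/a_nz //|i_ge].
    have -> : i.+1 = f by lia.
    by rewrite carry_period.
  move: (digit_bound i i_lt) (small_carry i.+1 i_lt) next_nz.
  by rewrite carry_rel /digit ai; case: He => ->; nia.
have := digits_of_constant_carry _ (carry_constant _ _ step (leq0n f) erefl).
by case: He => -> ->; [left | right]; congr nseq; ring.
Qed.

End PeriodicCarries.

Fixpoint carry (P k : int) (r : seq int) (i : nat) : int :=
  if i is j.+1 then digit P (carry P k r j) r`_j else k.

Lemma carry_closed P k r i :
  carry P k r i = P ^+ i * k - \sum_(j < i) P ^+ (i - 1 - j) * r`_j.
Proof.
elim: i => [|i IH]; first by rewrite big_ord0 expr0 mul1r subr0.
rewrite /= /digit IH big_ord_recr /=.
have -> : (i.+1 - 1 - i = 0)%N by lia.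
rewrite expr0 mul1r mulrBr mulrA -exprS.
rewrite mulr_sumr opprD addrA; congr (_ - _ - _); apply: eq_bigr => j _.
by rewrite mulrA -exprS; congr (_ ^+ _ * _); have := ltn_ord j; lia.
Qed.

Lemma carry_period_of_dvd (P : int) (f : nat) (r : seq int) :
  ((P ^+ f - 1) %| \sum_(i < f) P ^+ (f - 1 - i) * r`_i)%Z ->
  exists k, carry P k r f = carry P k r 0.
Proof. by case/dvdzP => k Hk; exists k; rewrite carry_closed Hk /=; ring. Qed.

Theorem mainTheorem9 (p f : nat) (r : seq int) :
  prime p -> (1 <= f)%N -> size r = f ->
  all (fun x => (- (p%:Z) <= x) && (x <= p%:Z)) r ->
  ((p%:Z ^+ f - 1) %| \sum_(i < f) p%:Z ^+ (f - 1 - i) * r`_i)%Z ->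
  (r = nseq f (p%:Z - 1) \/ r = nseq f (- (p%:Z - 1)))
  \/ cyclic_block_decomp p r
  \/ (p = 2%N /\ (r = nseq f 2 \/ r = nseq f (-2))).
Proof.
move=> /prime_gt1 p_gt1 f_gt0 size_r r_bd /carry_period_of_dvd[k period].
have digit_bound i : (i < f)%N -> `|r`_i| <= p%:Z.
  by move=> i_lt; rewrite ler_norml; move/(all_nthP 0): r_bd; apply; rewrite size_r.
pose a := carry p k r; have rel i : r`_i = digit p (a i) (a i.+1) by rewrite /a /= /digit; ring.
have [i0 i0_lt a_max] := max_carry f_gt0 period.
(* The digit at a maximal carry bounds that carry: p |a_i0| <= |r_i0| + |a_i0| <= p + |a_i0|. *)
have max_bound : (p%:Z - 1) * `|a i0| <= p%:Z.
  have pa : p%:Z * a i0 = r`_i0 + a i0.+1 by rewrite rel /digit; ring.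
  have := ler_normD r`_i0 (a i0.+1); rewrite -pa normrM.
  by move: (digit_bound i0 i0_lt) (a_max i0.+1 i0_lt); lra.
have [[p2 ai0]|small] : (p = 2%N /\ `|a i0| = 2) \/ (forall i, (i <= f)%N -> `|a i| <= 1).
- have [le1|gt1] := lerP `|a i0| 1; last by left; split; nia.
  by right => i /a_max; lra.
- subst p; do 2 right; split => //.
  apply: (constant_digits_of_large_carry f_gt0 period size_r digit_bound rel i0 erefl _ i0_lt ai0).
  by move=> i /a_max; rewrite ai0.
have [s /eqP as0|a_nz] := pickP (fun i : 'I_f => a i == 0).
  by right; left; apply: (block_decomp_of_zero_carry f_gt0 period size_r digit_bound rel small
    s (ltn_ord s) as0).
by left; apply: (constant_digits_of_nonzero_carries f_gt0 period size_r digit_bound rel small)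
  => i i_lt; have := a_nz (Ordinal i_lt); rewrite /= => ->.
Qed.
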